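(* Let $G\in\mathcal G^3_2$, let $a\in V(G)$ with $d(a)=3$, and let $x_1,x_2$ be two distinct neighbours of $a$. Suppose that for $j=1,2$ the vertex $x_j$ belongs to a $5$-leaf $X_j$ of $G$, where $X_1$ and $X_2$ are vertex-disjoint and $a\notin V(X_1)\cup V(X_2)$. Let $G'$ be obtained from $G-\big((V(X_1)\cup V(X_2))\setminus\{x_1,x_2\}\big)$ by adding the new edge $x_1x_2$. Then $\lambda(G')\ge v(G')/4$ implies $\lambda(G)\ge v(G)/4$.
   Context: All graphs are finite and simple. For integers $1\le r\le s$, $\mathcal G^s_r$ denotes the set of graphs in which every vertex has degree at least $r$ and at most $s$. $d(x)$ is the degree of $x$ in $G$, $v(\cdot)$ the number of vertices. $\lambda(G)$ denotes the maximum number of pairwise vertex-disjoint subgraphs of $G$ each of which is a path with exactly two edges. A block of a connected graph is a maximal connected subgraph $H$ such that $H-v$ is connected for every $v\in V(H)$. A block $B$ of $G$ is an end-block if exactly one vertex of $B$ is adjacent to a vertex of $G-B$. A leaf of $G$ is a vertex of degree one or an end-block with at least two edges; a $5$-leaf is a leaf with exactly $5$ vertices. *)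

(* A finite simple graph is represented on an ambient
   finType T by a vertex set V : {set T} and a symmetric irreflexive
   adjacency relation e : rel T; only edges between vertices of V count. *)
From mathcomp Require Import all_boot.
Set Implicit Arguments. Unset Strict Implicit. Unset Printing Implicit Defensive.

Section Graphs.
Variable T : finType.

Definition simple_graph (e : rel T) := symmetric e /\ irreflexive e.

Definition nbhd (V : {set T}) (e : rel T) (x : T) : {set T} :=
  [set y in V | e x y].
Definition deg (V : {set T}) (e : rel T) (x : T) : nat := #|nbhd V e x|.

Definition in_Gclass (r s : nat) (V : {set T}) (e : rel T) :=
  forall x, x \in V -> r <= deg V e x <= s.

Definition restr (B : {set T}) (e : rel T) : rel T :=
  [rel x y | [&& x \in B, y \in B & e x y]].

Definition conn_set (B : {set T}) (e : rel T) :=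
  forall x y, x \in B -> y \in B -> connect (restr B e) x y.

Definition block_like (B : {set T}) (e : rel T) :=
  conn_set B e /\ forall v, v \in B -> conn_set (B :\ v) e.

(* a block of G: maximal such (induced) subgraph; maximal subgraphs with
   this property are automatically induced, so we work with vertex sets *)
Definition is_block (V B : {set T}) (e : rel T) :=
  [/\ B \subset V, block_like B e &
      forall B' : {set T}, B \subset B' -> B' \subset V -> block_like B' e -> B' = B].

Definition is_end_block (V B : {set T}) (e : rel T) :=
  is_block V B e /\
  #|[set x in B | [exists y in V :\: B, e x y]]| = 1.

Definition n_edges (B : {set T}) (e : rel T) : nat :=
  #|[set p : T * T | [&& p.1 \in B, p.2 \in B & e p.1 p.2]]| %/ 2.

(* a 5-leaf: a leaf with exactly 5 vertices; a degree-one vertex has one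
   vertex, so this is an end-block with at least 2 edges and 5 vertices *)
Definition is_5leaf (V B : {set T}) (e : rel T) :=
  [/\ is_end_block V B e, 2 <= n_edges B e & #|B| = 5].

Definition is_P3 (V : {set T}) (e : rel T) (p : T * T * T) :=
  let: (u, c, w) := p in
  [&& u \in V, c \in V, w \in V, u != c, c != w, u != w, e u c & e c w].

Definition P3_verts (p : T * T * T) : {set T} :=
  let: (u, c, w) := p in [set u; c; w].

Definition P3_packing (V : {set T}) (e : rel T) (S : {set T * T * T}) :=
  [forall p in S, is_P3 V e p] &&
  [forall p in S, forall q in S, (p != q) ==> [disjoint P3_verts p & P3_verts q]].

Definition lambda (V : {set T}) (e : rel T) : nat :=
  \max_(S : {set T * T * T} | P3_packing V e S) #|S|.

Definition Gp_verts (V X1 X2 : {set T}) (x1 x2 : T) : {set T} :=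
  V :\: ((X1 :|: X2) :\: [set x1; x2]).
Definition Gp_rel (e : rel T) (x1 x2 : T) : rel T :=
  [rel x y | [|| e x y, (x == x1) && (y == x2) | (x == x2) && (y == x1)]].

End Graphs.

From mathcomp Require Import all_boot zify.
Set Implicit Arguments. Unset Strict Implicit. Unset Printing Implicit Defensive.

(* Take a maximum packing of G' by paths with two edges.  If no path uses
   the new edge x1x2, it is a packing of G avoiding X1 - x1 and X2 - x2; these
   4-vertex sets are connected because a block with 5 vertices is 2-connected,
   so each contains a path, and we gain two paths.  Otherwise the path through
   x1x2 has centre x1 (say) and a third vertex z outside X1 and X2.  Replace it
   by z x1 y, where y is a neighbour of x1 such that X1 - x1 - y is still
   connected (the minimal-component argument below), and add a path inside
   X1 - x1 - y and one inside X2 - x2: again a net gain of two.  As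
   v(G) = v(G') + 8, the bound lambda >= v/4 passes from G' to G. *)

Section Connectivity.
Variables (T : finType) (e : rel T).
Hypothesis e_sym : symmetric e.
Implicit Types (V B C : {set T}) (x y u v w : T).

Lemma restrE B x y : restr B e x y = [&& x \in B, y \in B & e x y].
Proof. by []. Qed.

Lemma restr_sym B : symmetric (restr B e).
Proof. by move=> x y; rewrite !restrE e_sym; case: (x \in B) (y \in B) => -[]. Qed.

Lemma connect_restrC B x y : connect (restr B e) x y = connect (restr B e) y x.
Proof. exact: (sym_connect_sym (restr_sym B)). Qed.

Lemma connect_restrS B C x y :
  B \subset C -> connect (restr B e) x y -> connect (restr C e) x y.
Proof.
move=> sBC; apply: connect_sub => u w; rewrite restrE => /and3P[uB wB euw].
by apply: connect1; rewrite restrE (subsetP sBC _ uB) (subsetP sBC _ wB).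
Qed.

Lemma conn_set_edge B (P : pred T) x y : conn_set B e -> x \in B -> y \in B ->
  P x -> ~~ P y -> exists u w, [/\ u \in B, w \in B, P u, ~~ P w & e u w].
Proof.
move=> Bconn xB yB; have /connectP[p] := Bconn x y xB yB.
elim: p x xB => [|h p IHp] x xB /=; first by move=> _ -> ->.
rewrite restrE => /andP[/and3P[_ hB exh] hp] yE Px Py.
case Ph: (P h); first exact: (IHp h).
by exists x, h; rewrite Ph.
Qed.

Definition component B x : {set T} := [set u in B | connect (restr B e) x u].

Lemma component_connect B x u w : u \in component B x -> w \in component B x ->
  connect (restr (component B x) e) u w.
Proof.
rewrite !inE => /andP[uB xu] /andP[_ xw].
have /connectP[p] : connect (restr B e) u w.
  by apply: connect_trans xw; rewrite connect_restrC.
elim: p u uB xu => [|h p IHp] u uB xu /=; first by move=> _ ->.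
rewrite restrE => /andP[/and3P[_ hB euh] hp] wE.
have xh : connect (restr B e) x h.
  by apply: connect_trans xu (connect1 _); rewrite restrE uB hB.
apply: connect_trans (connect1 _) (IHp h hB xh hp wE).
by rewrite restrE !inE uB hB xu xh.
Qed.

Lemma card_gt2_notin_set2 B u v : 2 < #|B| -> exists2 w, w \in B & w \notin [set u; v].
Proof.
move=> Bgt2; apply/exists_inP; rewrite -negb_forall_in; apply/negP => /forall_inP sB.
have : #|B| <= #|[set u; v]| by apply/subset_leq_card/subsetP.
by rewrite cards2 leqNgt (leq_trans _ Bgt2) //; case: (u != v).
Qed.

Lemma conn_set_P3 V B : B \subset V -> conn_set B e -> 2 < #|B| ->
  exists2 t, is_P3 V e t & P3_verts t \subset B.
Proof.
move=> sBV Bconn Bgt2.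
have [u uB] : exists u, u \in B by apply/card_gt0P; apply: leq_ltn_trans Bgt2.
have [y yB] := card_gt2_notin_set2 u u Bgt2; rewrite setUid inE => yu.
have [_ [c [_ cB /eqP-> /= cu euc]]] :=
  conn_set_edge (P := pred1 u) Bconn uB yB (eqxx u) yu.
have [w wB wuc] := card_gt2_notin_set2 u c Bgt2.
have [a [b [_ bB /[!inE] /orP[] /eqP-> /norP[bu bc] eab]]] :=
  conn_set_edge (P := [pred z | z \in [set u; c]]) Bconn uB wB (set21 u c) wuc.
- exists (c, u, b); last by rewrite /P3_verts !subUset !sub1set cB uB bB.
  by rewrite /= !(subsetP sBV) // cu eq_sym bu eq_sym bc e_sym euc eab.
- exists (u, c, b); last by rewrite /P3_verts !subUset !sub1set cB uB bB.
  by rewrite /= !(subsetP sBV) // eq_sym cu eq_sym bc eq_sym bu euc eab.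
Qed.

Lemma conn_setP B :
  reflect (conn_set B e) [forall u in B, forall w in B, connect (restr B e) u w].
Proof.
apply: (iffP forall_inP) => [Bconn u w uB wB | Bconn u uB].
  by have /forall_inP := Bconn u uB; apply.
by apply/forall_inP => w; apply: Bconn.
Qed.

Lemma not_conn_set B y : ~ conn_set B e -> y \in B ->
  exists2 w, w \in B & ~~ connect (restr B e) y w.
Proof.
move=> /conn_setP /forall_inPn [u uB /forall_inPn [w wB /negP uw]] yB.
case yu: (connect (restr B e) y u); last by exists u => //; rewrite yu.
exists w => //; apply/negP => yw; apply: uw.
by apply: connect_trans yw; rewrite connect_restrC.
Qed.

Lemma setD1C B x y : B :\ x :\ y = B :\ y :\ x.
Proof. by rewrite !setDDl setUC. Qed.

Lemma mem_component B x : x \in B -> x \in component B x.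
Proof. by move=> xB; rewrite inE xB connect0. Qed.

Lemma component_sub B x : component B x \subset B.
Proof. by apply/subsetP => u; rewrite inE => /andP[]. Qed.

Lemma component_nbr B x v : conn_set B e -> x \in B -> v \in B :\ x ->
  exists2 u, u \in component (B :\ x) v & e u x.
Proof.
move=> Bconn xB vBx; have vB : v \in B by move: vBx; rewrite inE => /andP[].
have [|u [w [_ wB uC wC euw]]] :=
  conn_set_edge (P := mem (component (B :\ x) v)) Bconn vB xB (mem_component vBx).
  by rewrite !inE eqxx.
exists u => //; case: (eqVneq w x) => [<- //|wx]; case/negP: wC.
move: uC; rewrite !inE wx wB => /andP[/andP[ux uB] vu] /=.
by apply: connect_trans vu (connect1 _); rewrite restrE !inE ux uB wx wB.
Qed.

Section NonSeparatingNeighbour.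
Variables (B : {set T}) (x : T).
Hypotheses (B_block : block_like B e) (xB : x \in B).

Let sep_pair y v := [/\ y \in B :\ x, e x y, v \in B :\ x :\ y &
  ~~ (B :\ x :\ y \subset component (B :\ x :\ y) v)].

Hypothesis all_separating :
  forall y, y \in B :\ x -> e x y -> ~ conn_set (B :\ x :\ y) e.

(* The classical minimal-component argument: a component of B - x - y that
   does not contain everything contains a neighbour y' of x, and B - x - y'
   then has a component strictly inside it. *)
Lemma sep_pair_shrink y v : sep_pair y v -> exists y' v', sep_pair y' v' /\
  #|component (B :\ x :\ y') v'| < #|component (B :\ x :\ y) v|.
Proof.
case=> yBx _ vD _; set D := B :\ x :\ y; set C := component D v.
have [yx yB] : y != x /\ y \in B by apply/andP; rewrite -in_setD1.
have [y' y'C ey'x] : exists2 y', y' \in C & e y' x.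
  rewrite /C /D setD1C; apply: component_nbr; first exact: B_block.2.
    by rewrite !inE eq_sym yx xB.
  by rewrite setD1C.
have y'D : y' \in D := subsetP (component_sub _ _) _ y'C.
have [y'y y'Bx] : y' != y /\ y' \in B :\ x by apply/andP; rewrite -in_setD1.
set D' := B :\ x :\ y'.
have yD' : y \in D' by rewrite !inE yx yB eq_sym y'y.
have [w wD' yw] := not_conn_set (all_separating y'Bx (etrans (e_sym x y') ey'x)) yD'.
set C' := component D' w.
have yC' : y \notin C' by rewrite inE yD' /= (connect_restrC D' w y).
exists y', w; split.
  split=> //; first by rewrite e_sym.
  by apply/subsetPn; exists y.
have C'D : C' \subset D.
  apply/subsetP => u uC'; have := subsetP (component_sub _ _) _ uC'.
  by rewrite !inE => /and3P[_ -> ->]; rewrite !andbT; apply: contraNneq yC' => <-.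
have [u1 u1C' eu1y'] := component_nbr (B_block.2 x xB) y'Bx wD'.
apply: proper_card; apply/properP; split; last first.
  exists y' => //; apply/negP => /(subsetP (component_sub _ _)).
  by rewrite !inE eqxx.
apply/subsetP => u uC'; rewrite inE (subsetP C'D _ uC') /=.
apply: connect_trans (connect_restrS C'D (component_connect u1C' uC')).
move: y'C; rewrite inE => /andP[_ vy']; apply: connect_trans vy' (connect1 _).
by rewrite restrE y'D (subsetP C'D _ u1C') e_sym.
Qed.

Lemma no_sep_pair y v : ~ sep_pair y v.
Proof.
move: {2}#|_|.+1 (ltnSn #|component (B :\ x :\ y) v|) => n.
elim: n y v => // n IHn y v ltCn /sep_pair_shrink [y' [v' [sep' lt']]].
exact: IHn (leq_trans lt' ltCn) sep'.
Qed.

End NonSeparatingNeighbour.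

Lemma block_like_nonsep_nbr B x : block_like B e -> x \in B -> 1 < #|B| ->
  exists y, [/\ y \in B :\ x, e x y & conn_set (B :\ x :\ y) e].
Proof.
move=> B_block xB Bgt1.
case: (boolP [exists y in B :\ x, e x y &&
   [forall u in B :\ x :\ y, forall w in B :\ x :\ y,
      connect (restr (B :\ x :\ y) e) u w]]).
  by case/exists_inP => y yBx /andP[exy /conn_setP]; exists y.
move/exists_inPn => all_sep.
have {}all_sep y : y \in B :\ x -> e x y -> ~ conn_set (B :\ x :\ y) e.
  by move=> yBx exy /conn_setP Dconn; move: (all_sep y yBx); rewrite exy Dconn.
have [v vBx] : exists v, v \in B :\ x.
  by apply/card_gt0P; move: Bgt1; rewrite (cardsD1 x) xB.
have [y yC eyx] := component_nbr B_block.1 xB vBx.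
have yBx : y \in B :\ x := subsetP (component_sub _ _) _ yC.
have exy : e x y by rewrite e_sym.
have /conn_setP/forall_inPn[u uD /forall_inPn[w wD uw]] := all_sep y yBx exy.
case: (no_sep_pair B_block xB all_sep (y := y) (v := u)); split=> //.
by apply/subsetPn; exists w => //; rewrite inE wD.
Qed.

Lemma block_like_P3_setD1 V B x : B \subset V -> block_like B e -> x \in B ->
  3 < #|B| -> exists2 t, is_P3 V e t & P3_verts t \subset B :\ x.
Proof.
move=> sBV [_ Bconn] xB Bgt3; apply: conn_set_P3 (Bconn x xB) _.
  exact: subset_trans (subD1set B x) sBV.
by move: Bgt3; rewrite (cardsD1 x) xB.
Qed.

Lemma block_like_nbr_P3 V B x : B \subset V -> block_like B e -> x \in B ->
  4 < #|B| -> exists y t,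
    [/\ y \in B :\ x, e x y, is_P3 V e t & P3_verts t \subset B :\ x :\ y].
Proof.
move=> sBV B_block xB Bgt4.
have [|y [yBx exy Dconn]] := block_like_nonsep_nbr B_block xB.
  exact: leq_trans Bgt4.
have sDV : B :\ x :\ y \subset V.
  exact: subset_trans (subD1set _ y) (subset_trans (subD1set B x) sBV).
have [|t tP3 tD] := conn_set_P3 sDV Dconn.
  by move: Bgt4; rewrite (cardsD1 x) xB (cardsD1 y (B :\ x)) yBx.
by exists y, t.
Qed.

End Connectivity.

Lemma disjointsU (T : finType) (A B C : {set T}) :
  [disjoint A :|: B & C] = [disjoint A & C] && [disjoint B & C].
Proof. by rewrite -!setI_eq0 setIUl setU_eq0. Qed.

Section Packings.
Variables (T : finType) (V : {set T}) (e : rel T).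
Implicit Types (S : {set T * T * T}) (t q : T * T * T).

Definition covered S : {set T} := \bigcup_(q in S) P3_verts q.

Lemma covered_setU1 S t : covered (t |: S) = P3_verts t :|: covered S.
Proof. by rewrite /covered bigcup_setU big_set1. Qed.

Lemma P3_verts_covered S q : q \in S -> P3_verts q \subset covered S.
Proof. exact: bigcup_sup. Qed.

Lemma P3_packing_disjoint S p q : P3_packing V e S -> p \in S -> q \in S -> p != q ->
  [disjoint P3_verts p & P3_verts q].
Proof. by case/andP=> _ /forall_inP/(_ p) pS /pS /forall_inP/(_ q) qS /qS /implyP. Qed.

Lemma P3_packing_setU1 S t : P3_packing V e S -> is_P3 V e t ->
  [disjoint P3_verts t & covered S] ->
  P3_packing V e (t |: S) /\ #|t |: S| = #|S|.+1.
Proof.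
case/andP=> /forall_inP S_P3 /forall_inP S_disj tP3 t_S.
have tq q : q \in S -> [disjoint P3_verts t & P3_verts q].
  by move=> qS; apply: disjointWr t_S; apply: P3_verts_covered.
have tS : t \notin S.
  apply/negP=> /tq; case: t {tP3 t_S tq} => [[u c] w] /disjointFr.
  by move/(_ u); rewrite !inE eqxx => /(_ isT).
split; last by rewrite cardsU1 tS.
apply/andP; split; apply/forall_inP => p; rewrite in_setU1 => /predU1P[-> | pS] //;
  try exact: S_P3.
  apply/forall_inP => q; rewrite in_setU1 => /predU1P[-> | qS]; first by rewrite eqxx.
  by rewrite tq ?implybT.
apply/forall_inP => q; rewrite in_setU1 => /predU1P[-> | qS].
  by rewrite disjoint_sym tq ?implybT.
by have /forall_inP := S_disj p pS; apply.
Qed.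

Lemma P3_packing_sub S S' : P3_packing V e S -> S' \subset S -> P3_packing V e S'.
Proof.
case/andP=> /forall_inP S_P3 /forall_inP S_disj /subsetP sS'S; apply/andP; split.
  by apply/forall_inP => p /sS'S /S_P3.
apply/forall_inP => p /sS'S /S_disj /forall_inP pdisj.
by apply/forall_inP => q /sS'S /pdisj.
Qed.

Lemma P3_packing_transfer V' e' S : P3_packing V' e' S ->
  (forall q, q \in S -> is_P3 V e q) -> P3_packing V e S.
Proof. by case/andP=> _ S_disj S_P3; apply/andP; split => //; apply/forall_inP. Qed.

Lemma covered_sub S : P3_packing V e S -> covered S \subset V.
Proof.
case/andP=> /forall_inP S_P3 _; apply/bigcupsP => -[[u c] w] /S_P3 /and4P[uV cV wV _].
by rewrite /P3_verts !subUset !sub1set uV cV wV.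
Qed.

Lemma leq_lambda S : P3_packing V e S -> #|S| <= lambda V e.
Proof. exact: (@leq_bigmax_cond _ (P3_packing V e) (fun S => #|S|)). Qed.

Lemma lambda_attained : exists2 S, P3_packing V e S & lambda V e = #|S|.
Proof.
have [|S Spack maxS] := @eq_bigmax_cond _ (P3_packing V e) (fun S => #|S|).
  by apply/card_gt0P; exists set0; apply/andP; split; apply/forall_inP => p; rewrite inE.
by exists S; last exact: maxS.
Qed.

End Packings.

Section Leaves.
Variables (T : finType) (V : {set T}) (e : rel T).
Hypothesis e_sym : symmetric e.
Implicit Types (X Y : {set T}) (S : {set T * T * T}).

Lemma extend_leaf X c S : X \subset V -> block_like X e -> 3 < #|X| -> c \in X ->
  P3_packing V e S -> [disjoint X :\ c & covered S] ->
  exists S', [/\ P3_packing V e S', #|S'| = #|S|.+1 &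
                 covered S' \subset (X :\ c) :|: covered S].
Proof.
move=> sXV X_block Xgt3 cX Spack XS.
have [t tP3 tX] := block_like_P3_setD1 e_sym sXV X_block cX Xgt3.
have [tSpack tScard] := P3_packing_setU1 Spack tP3 (disjointWl tX XS).
by exists (t |: S); rewrite covered_setU1 setSU.
Qed.

Lemma extend_leaf_nbr X c z S : X \subset V -> block_like X e -> 4 < #|X| -> c \in X ->
  z \in V -> z \notin X -> e c z -> P3_packing V e S -> [disjoint z |: X & covered S] ->
  exists S', [/\ P3_packing V e S', #|S'| = #|S|.+2 &
                 covered S' \subset (z |: X) :|: covered S].
Proof.
move=> sXV X_block Xgt4 cX zV zX ecz Spack XS.
have [y [t [yXc ecy tP3 tX]]] := block_like_nbr_P3 e_sym sXV X_block cX Xgt4.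
have [yc yX] : y != c /\ y \in X by apply/andP; rewrite -in_setD1.
have zc : z != c by apply: contraNneq zX => ->.
have zy : z != y by apply: contraNneq zX => ->.
have zcyP3 : is_P3 V e (z, c, y).
  by rewrite /= zV !(subsetP sXV) // zc eq_sym yc zy e_sym ecz ecy.
have zcyX : P3_verts (z, c, y) \subset z |: X.
  by rewrite /P3_verts !subUset !sub1set !inE eqxx cX yX !orbT.
have [S1pack S1card] := P3_packing_setU1 Spack zcyP3 (disjointWl zcyX XS).
have XcyX : X :\ c :\ y \subset z |: X.
  exact: subset_trans (subD1set _ _) (subset_trans (subD1set _ _) (subsetU1 _ _)).
have tS1 : [disjoint P3_verts t & covered ((z, c, y) |: S)].
  apply: disjointWl tX _; rewrite covered_setU1 disjoint_sym disjointsU.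
  apply/andP; split; last by rewrite disjoint_sym (disjointWl XcyX XS).
  rewrite disjoints_subset; apply/subsetP => v; rewrite !inE.
  by case/orP=> [/orP[]|] /eqP->; rewrite ?eqxx ?(negPf zX) ?andbF.
have [S2pack S2card] := P3_packing_setU1 S1pack tP3 tS1.
exists (t |: ((z, c, y) |: S)); split; rewrite ?S2card ?S1card //.
by rewrite !covered_setU1 setUA setSU // subUset zcyX (subset_trans tX XcyX).
Qed.

Lemma extend_two_leaves X Y c d S :
  X \subset V -> Y \subset V -> block_like X e -> block_like Y e ->
  3 < #|X| -> 3 < #|Y| -> [disjoint X & Y] -> c \in X -> d \in Y ->
  P3_packing V e S -> [disjoint (X :\ c) :|: (Y :\ d) & covered S] ->
  exists2 S', P3_packing V e S' & #|S'| = #|S| + 2.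
Proof.
move=> sXV sYV X_block Y_block Xgt3 Ygt3 XY cX dY Spack.
rewrite disjointsU => /andP[XS YS].
have [S1 [S1pack S1card S1cov]] := extend_leaf sXV X_block Xgt3 cX Spack XS.
have YS1 : [disjoint Y :\ d & covered S1].
  rewrite disjoint_sym (disjointWl S1cov) // disjointsU; apply/andP; split.
    exact: disjointW (subD1set _ _) (subD1set _ _) XY.
  by rewrite disjoint_sym.
have [S2 [S2pack S2card _]] := extend_leaf sYV Y_block Ygt3 dY S1pack YS1.
by exists S2; rewrite // S2card S1card addn2.
Qed.

Lemma extend_leaves_nbr X Y c d z S :
  X \subset V -> Y \subset V -> block_like X e -> block_like Y e ->
  4 < #|X| -> 3 < #|Y| -> [disjoint X & Y] -> c \in X -> d \in Y ->
  z \in V -> z \notin X :|: Y -> e c z ->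
  P3_packing V e S -> [disjoint z |: (X :|: Y) & covered S] ->
  exists2 S', P3_packing V e S' & #|S'| = #|S| + 3.
Proof.
move=> sXV sYV X_block Y_block Xgt4 Ygt3 XY cX dY zV.
rewrite inE negb_or => /andP[zX zY] ecz Spack XYS.
have XS : [disjoint z |: X & covered S].
  by apply: disjointWl XYS; rewrite setUA subsetUl.
have [S1 [S1pack S1card S1cov]] := extend_leaf_nbr sXV X_block Xgt4 cX zV zX ecz Spack XS.
have YS1 : [disjoint Y :\ d & covered S1].
  rewrite disjoint_sym (disjointWl S1cov) // disjointsU; apply/andP; split.
    rewrite disjoint_sym (disjointWl (subD1set _ _)) //.
    by rewrite disjoint_sym disjointsU disjoints1 zY.
  rewrite disjoint_sym; apply: disjointWl XYS.
  exact: subset_trans (subD1set _ _) (subset_trans (subsetUr X Y) (subsetU1 _ _)).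
have [S2 [S2pack S2card _]] := extend_leaf sYV Y_block Ygt3 dY S1pack YS1.
by exists S2; rewrite // S2card S1card addn3.
Qed.

End Leaves.

Lemma is_P3_rev (T : finType) (V : {set T}) (r : rel T) (u c w : T) : symmetric r ->
  is_P3 V r (u, c, w) = is_P3 V r (w, c, u).
Proof.
move=> r_sym /=; rewrite (eq_sym w c) (eq_sym c u) (eq_sym w u) (r_sym w c) (r_sym c u).
by case: (u \in V); case: (c \in V); case: (w \in V);
  case: (u != c); case: (c != w); case: (u != w); case: (r u c); case: (r c w).
Qed.

Lemma P3_verts_rev (T : finType) (u c w : T) : P3_verts (u, c, w) = P3_verts (w, c, u).
Proof. by apply/setP => v; rewrite !inE; case: (v == u); case: (v == c); case: (v == w). Qed.

Section NewEdge.
Variables (T : finType) (V W : {set T}) (e : rel T) (x1 x2 : T).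
Hypotheses (e_sym : symmetric e) (sWV : W \subset V).
Local Notation e' := (Gp_rel e x1 x2).

Lemma Gp_relE u v :
  e' u v = [|| e u v, (u == x1) && (v == x2) | (u == x2) && (v == x1)].
Proof. by []. Qed.

Lemma Gp_rel_sym : symmetric e'.
Proof.
move=> u v; rewrite !Gp_relE e_sym.
by case: (u == x1); case: (u == x2); case: (v == x1); case: (v == x2).
Qed.

Lemma is_P3_Gp u c w : is_P3 W e' (u, c, w) -> is_P3 V e (u, c, w) = e u c && e c w.
Proof.
case/and4P=> uW cW wW /and5P[uc cw uw _ _].
by rewrite /= !(subsetP sWV) // uc cw uw.
Qed.

Lemma is_P3_Gp_old q : is_P3 W e' q ->
  x1 \notin P3_verts q -> x2 \notin P3_verts q -> is_P3 V e q.
Proof.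
case: q => [[u c] w] qP3; rewrite (is_P3_Gp qP3) !inE !negb_or.
rewrite ![x1 == _]eq_sym ![x2 == _]eq_sym.
case/and4P: qP3 => _ _ _ /and5P[_ _ _ euc ecw].
case/andP=> [/andP[ux1 cx1] _] /andP[/andP[ux2 cx2] _].
move: euc ecw; rewrite !Gp_relE (negPf ux1) (negPf ux2) (negPf cx1) (negPf cx2) !orbF.
by move=> -> ->.
Qed.

Lemma is_P3_Gp_new u c w : is_P3 W e' (u, c, w) -> ~~ is_P3 V e (u, c, w) ->
  exists z, [/\ c \in [set x1; x2], P3_verts (u, c, w) = [set x1; x2; z],
                z \in W, z \notin [set x1; x2] & e c z].
Proof.
move=> P3'; rewrite (is_P3_Gp P3').
wlog neuc : u w P3' / ~~ e u c.
  move=> gen; case/orP: (orbN (e u c)) => [euc | neuc]; last exact: gen u w P3' neuc.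
  rewrite P3_verts_rev euc /= => necw; apply: (gen w u).
  - by rewrite -is_P3_rev //; apply: Gp_rel_sym.
  - by rewrite e_sym.
  - by rewrite (e_sym w c) (negPf necw).
move=> _; case/and4P: P3' => _ _ wW /and5P[uc cw uw].
rewrite !Gp_relE (negPf neuc) /= => ucnew ecw'.
have wx12 : w \notin [set x1; x2].
  by rewrite !inE; case/orP: ucnew => /andP[/eqP<- /eqP<-]; rewrite negb_or !(eq_sym w) uw cw.
have ecw : e c w.
  move: ecw' wx12; rewrite !inE negb_or => /or3P[// | /andP[_ /eqP->] | /andP[_ /eqP->]];
    by rewrite eqxx ?andbF.
exists w; split=> //.
  by rewrite !inE; case/orP: ucnew => /andP[_ ->]; rewrite ?orbT.
by apply/setP => v; rewrite !inE; case/orP: ucnew => /andP[/eqP-> /eqP->];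
  case: (v == x1) (v == x2) => -[].
Qed.

End NewEdge.

Lemma Gp_verts_leaf (T : finType) (V X1 X2 : {set T}) x1 x2 v :
  v \in Gp_verts V X1 X2 x1 x2 -> v \in X1 :|: X2 -> v \in [set x1; x2].
Proof. by rewrite !inE => /andP[+ _] vX; rewrite vX andbT negbK. Qed.

Lemma card_Gp_verts (T : finType) (V X1 X2 : {set T}) x1 x2 :
  #|V| <= #|Gp_verts V X1 X2 x1 x2| + #|X1 :\ x1| + #|X2 :\ x2|.
Proof.
have sV : V \subset Gp_verts V X1 X2 x1 x2 :|: X1 :\ x1 :|: X2 :\ x2.
  apply/subsetP => v vV; rewrite !inE vV andbT.
  by case: (v == x1); case: (v == x2); case: (v \in X1); case: (v \in X2).
have cardU (A B : {set T}) : #|A :|: B| <= #|A| + #|B| by rewrite cardsU leq_subr.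
apply: leq_trans (subset_leq_card sV) (leq_trans (cardU _ _) _).
by rewrite leq_add2r cardU.
Qed.

Section Reduction.
Variables (T : finType) (V : {set T}) (e : rel T) (x1 x2 : T) (X1 X2 : {set T}).
Hypotheses (e_sym : symmetric e) (x1X1 : x1 \in X1) (x2X2 : x2 \in X2).
Hypotheses (sX1V : X1 \subset V) (X1_block : block_like X1 e) (X1card : #|X1| = 5).
Hypotheses (sX2V : X2 \subset V) (X2_block : block_like X2 e) (X2card : #|X2| = 5).
Hypothesis X12 : [disjoint X1 & X2].
Local Notation W := (Gp_verts V X1 X2 x1 x2).
Local Notation e' := (Gp_rel e x1 x2).

Let sWV : W \subset V := subsetDl _ _.
Let X1gt4 : 4 < #|X1|. Proof. by rewrite X1card. Qed.
Let X2gt4 : 4 < #|X2|. Proof. by rewrite X2card. Qed.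

Lemma card_Gp_verts_leaves : #|V| <= #|W| + 8.
Proof.
have X1x1 : #|X1 :\ x1| = 4 by move: X1card; rewrite (cardsD1 x1) x1X1 => -[].
have X2x2 : #|X2 :\ x2| = 4 by move: X2card; rewrite (cardsD1 x2) x2X2 => -[].
by have := card_Gp_verts V X1 X2 x1 x2; rewrite X1x1 X2x2 -addnA.
Qed.

Lemma Gp_packing_old S' : P3_packing W e' S' -> (forall q, q \in S' -> is_P3 V e q) ->
  exists2 S2, P3_packing V e S2 & #|S2| = #|S'| + 2.
Proof.
move=> S'pack S'P3; apply: (extend_two_leaves e_sym sX1V sX2V X1_block X2_block
  (ltnW X1gt4) (ltnW X2gt4) X12 x1X1 x2X2 (P3_packing_transfer S'pack S'P3)).
rewrite disjoint_sym disjoints_subset; apply/subsetP => v /(subsetP (covered_sub S'pack)) vW.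
rewrite !inE negb_or; apply/andP; split; apply/negP => /andP[vx vX];
  have /(Gp_verts_leaf vW) : v \in X1 :|: X2 by rewrite inE vX ?orbT.
- rewrite !inE (negPf vx) => /eqP vE.
  by move: (disjointFl X12 x2X2); rewrite -vE vX.
- rewrite !inE (negPf vx) orbF => /eqP vE.
  by move: (disjointFr X12 x1X1); rewrite -vE vX.
Qed.

Lemma Gp_packing_setD1 S' q z : P3_packing W e' S' -> q \in S' ->
  P3_verts q = [set x1; x2; z] ->
  P3_packing V e (S' :\ q) /\ [disjoint z |: (X1 :|: X2) & covered (S' :\ q)].
Proof.
move=> S'pack qS' qverts.
have qS q' : q' \in S' :\ q -> [disjoint P3_verts q & P3_verts q'].
  by rewrite in_setD1 => /andP[q'q q'S']; rewrite (P3_packing_disjoint S'pack) // eq_sym.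
have sS' q' : q' \in S' :\ q -> q' \in S' by rewrite in_setD1 => /andP[].
split.
  apply: P3_packing_transfer (P3_packing_sub S'pack (subD1set S' q)) _ => q' q'S.
  have /andP[/forall_inP S'P3 _] := S'pack.
  apply: (is_P3_Gp_old sWV (S'P3 q' (sS' q' q'S))); apply/negP => xq';
    by move: (disjointFl (qS q' q'S) xq'); rewrite qverts !inE eqxx ?orbT.
rewrite disjoint_sym disjoints_subset; apply/bigcupsP => q' q'S; apply/subsetP => v vq'.
have vW : v \in W.
  exact: subsetP (covered_sub S'pack) _ (subsetP (P3_verts_covered (sS' q' q'S)) _ vq').
move: (disjointFl (qS q' q'S) vq'); rewrite qverts !inE => /norP[/norP[vx1 vx2] vz].
rewrite negb_or vz /=; apply/negP => vX.
have /(Gp_verts_leaf vW) : v \in X1 :|: X2 by rewrite inE.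
by rewrite !inE (negPf vx1) (negPf vx2).
Qed.

Lemma Gp_packing_new S' q : P3_packing W e' S' -> q \in S' -> ~~ is_P3 V e q ->
  exists2 S2, P3_packing V e S2 & #|S2| = #|S'| + 2.
Proof.
case: q => [[u c] w] S'pack qS' qnotP3.
have qP3 : is_P3 W e' (u, c, w) by case/andP: S'pack => /forall_inP/(_ _ qS').
have [z [cx12 qverts zW zx12 ecz]] := is_P3_Gp_new e_sym sWV qP3 qnotP3.
have [Spack SX] := Gp_packing_setD1 S'pack qS' qverts.
have zV : z \in V := subsetP sWV z zW.
have zX12 : z \notin X1 :|: X2 by apply: contraNN zx12 => /(Gp_verts_leaf zW).
suff [S2 S2pack S2card] : exists2 S2, P3_packing V e S2 & #|S2| = #|S' :\ (u, c, w)| + 3.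
  by exists S2; rewrite // S2card (cardsD1 (u, c, w) S') qS' addSn addn2 addn3.
move: cx12; rewrite !inE => /orP[] /eqP ce; rewrite ce in ecz.
  exact: (extend_leaves_nbr e_sym sX1V sX2V X1_block X2_block X1gt4 (ltnW X2gt4) X12
    x1X1 x2X2 zV zX12 ecz Spack SX).
rewrite [X1 :|: X2]setUC in zX12 SX.
exact: (extend_leaves_nbr e_sym sX2V sX1V X2_block X1_block X2gt4 (ltnW X1gt4)
  (etrans (disjoint_sym _ _) X12) x2X2 x1X1 zV zX12 ecz Spack SX).
Qed.

Lemma Gp_packing_gain S' : P3_packing W e' S' ->
  exists2 S2, P3_packing V e S2 & #|S2| = #|S'| + 2.
Proof.
move=> S'pack; case: (boolP [forall q in S', is_P3 V e q]) => [/forall_inP | ].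
  exact: Gp_packing_old.
by case/forall_inPn => q qS' qnotP3; apply: Gp_packing_new qnotP3.
Qed.

End Reduction.

Lemma is_5leaf_block (T : finType) (V X : {set T}) (e : rel T) :
  is_5leaf V X e -> [/\ X \subset V, block_like X e & #|X| = 5].
Proof. by case=> [[[sXV X_block _] _] _ Xcard]. Qed.

Theorem lemma3p6 (T : finType) (V : {set T}) (e : rel T)
    (a x1 x2 : T) (X1 X2 : {set T}) :
  simple_graph e ->
  in_Gclass 2 3 V e ->
  a \in V -> deg V e a = 3 ->
  x1 != x2 -> x1 \in nbhd V e a -> x2 \in nbhd V e a ->
  x1 \in X1 -> x2 \in X2 ->
  is_5leaf V X1 e -> is_5leaf V X2 e ->
  [disjoint X1 & X2] -> a \notin X1 :|: X2 ->
  #|Gp_verts V X1 X2 x1 x2| <= 4 * lambda (Gp_verts V X1 X2 x1 x2) (Gp_rel e x1 x2) ->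
  #|V| <= 4 * lambda V e.
Proof.
move=> [e_sym _] _ _ _ _ _ _ x1X1 x2X2 /is_5leaf_block[sX1V X1_block X1card]
  /is_5leaf_block[sX2V X2_block X2card] X12 _.
have [S' S'pack ->] := lambda_attained (Gp_verts V X1 X2 x1 x2) (Gp_rel e x1 x2).
have cardV := card_Gp_verts_leaves V x1X1 x2X2 X1card X2card.
have [S2 S2pack S2card] := Gp_packing_gain e_sym x1X1 x2X2 sX1V X1_block X1card
  sX2V X2_block X2card X12 S'pack.
by have := leq_lambda S2pack; lia.
Qed.
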